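(* Consider the five-node network with $\mathcal N=\{1,2,3,4,5\}$, $\mathcal E=\{(3,4),(2,4),(4,5),(1,5)\}$, observing nodes $\mathcal J=\{1,2,3\}$ and decision node $5$, and take the time-sharing variable $Q$ constant. For random variables with joint law $P_{X_1,X_2,X_3,Y}P_{U_1|X_1}P_{U_2|X_2}P_{U_3|X_3}$ (finite alphabets), the following are equivalent for a pair $(\Delta,C_{\rm sum})\in\mathbb R_+^2$: (i) $\Delta\le I(Y;U_1,U_2,U_3)$ and there exist $C_{15},C_{24},C_{34},C_{45}\ge0$ with $C_{15}+C_{24}+C_{34}+C_{45}=C_{\rm sum}$ and $R_1,R_2,R_3\ge0$ such that $C_{15}\ge R_1$, $C_{24}\ge R_2$, $C_{34}\ge R_3$, $C_{45}\ge R_2+R_3$, $R_1\ge I(U_1;X_1|U_2,U_3)$, $R_2\ge I(U_2;X_2|U_1,U_3)$, $R_3\ge I(U_3;X_3|U_1,U_2)$, $R_2+R_3\ge I(X_2,X_3;U_2,U_3|U_1)$, $R_1+R_3\ge I(X_1,X_3;U_1,U_3|U_2)$, $R_1+R_2\ge I(X_1,X_2;U_1,U_2|U_3)$, $R_1+R_2+R_3\ge I(X_1,X_2,X_3;U_1,U_2,U_3)$; (ii) $\Delta\le I(Y;U_1,U_2,U_3)$ and $C_{\rm sum}\ge I(X_1,X_2,X_3;U_1,U_2,U_3)+I(X_2,X_3;U_2,U_3|U_1)$. Consequently the region $\mathcal{RI}_{\rm sum}$ equals the union over all conditionals $P_{U_1|X_1},P_{U_2|X_2},P_{U_3|X_3}$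 of the pairs satisfying (ii).
   Context: $\mathcal{RI}_{\rm sum}$ denotes the set of pairs $(\Delta,C_{\rm sum})\in\mathbb R_+^2$ for which, for some conditionals $P_{U_1|X_1},P_{U_2|X_2},P_{U_3|X_3}$, condition (i) holds (this is the set of pairs for which the relevance given by the achievability result for general networks is attainable with some edge capacities of total sum $C_{\rm sum}$). All mutual informations are computed under the joint law $P_{X_1,X_2,X_3,Y}P_{U_1|X_1}P_{U_2|X_2}P_{U_3|X_3}$. *)

From HB Require Import structures.
From mathcomp Require Import all_boot all_order all_algebra.
From mathcomp Require Import reals exp.
Set Implicit Arguments. Unset Strict Implicit. Unset Printing Implicit Defensive.
Import Order.TTheory GRing.Theory Num.Theory.
Local Open Scope ring_scope.

Section InfoTheory.
Variable R : realType.

Definition is_pmf (T : finType) (p : T -> R) : Prop :=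
  (forall t, 0 <= p t) /\ \sum_(t : T) p t = 1.

Definition is_kernel (X U : finType) (W : X -> U -> R) : Prop :=
  forall x, is_pmf (W x).

Definition law (Om T : finType) (p : Om -> R) (f : Om -> T) (t : T) : R :=
  \sum_(w : Om | f w == t) p w.

(* Shannon entropy (natural log; 0 ln 0 = 0 holds since the term is 0 * _). *)
Definition entropy (Om T : finType) (p : Om -> R) (f : Om -> T) : R :=
  - \sum_(t : T) law p f t * ln (law p f t).

Definition cmi (Om A B C : finType) (p : Om -> R)
  (a : Om -> A) (b : Om -> B) (c : Om -> C) : R :=
  entropy p (fun w => (a w, c w)) + entropy p (fun w => (b w, c w))
  - entropy p (fun w => (a w, b w, c w)) - entropy p c.

Definition mi (Om A B : finType) (p : Om -> R) (a : Om -> A) (b : Om -> B) : R :=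
  cmi p a b (fun _ => tt).

End InfoTheory.

Section Network.
Variables (R : realType) (X1 X2 X3 Y U1 U2 U3 : finType).

Definition Om : finType := (X1 * X2 * X3 * Y * U1 * U2 * U3)%type.

Definition jointLaw (P : X1 * X2 * X3 * Y -> R)
  (W1 : X1 -> U1 -> R) (W2 : X2 -> U2 -> R) (W3 : X3 -> U3 -> R) (w : Om) : R :=
  let: (x1, x2, x3, y, u1, u2, u3) := w in
  P (x1, x2, x3, y) * W1 x1 u1 * W2 x2 u2 * W3 x3 u3.

Definition vX1 (w : Om) : X1 := w.1.1.1.1.1.1.
Definition vX2 (w : Om) : X2 := w.1.1.1.1.1.2.
Definition vX3 (w : Om) : X3 := w.1.1.1.1.2.
Definition vY  (w : Om) : Y  := w.1.1.1.2.
Definition vU1 (w : Om) : U1 := w.1.1.2.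
Definition vU2 (w : Om) : U2 := w.1.2.
Definition vU3 (w : Om) : U3 := w.2.

Variables (P : X1 * X2 * X3 * Y -> R)
  (W1 : X1 -> U1 -> R) (W2 : X2 -> U2 -> R) (W3 : X3 -> U3 -> R).

Let p := jointLaw P W1 W2 W3.

Definition cond_i (Delta Csum : R) : Prop :=
  Delta <= mi p vY (fun w => (vU1 w, vU2 w, vU3 w)) /\
  exists C15 C24 C34 C45 R1 R2 R3 : R,
    [/\ 0 <= C15, 0 <= C24, 0 <= C34, 0 <= C45 &
        C15 + C24 + C34 + C45 = Csum] /\
    [/\ 0 <= R1, 0 <= R2 & 0 <= R3] /\
    [/\ C15 >= R1, C24 >= R2, C34 >= R3 & C45 >= R2 + R3] /\
    [/\ R1 >= cmi p vU1 vX1 (fun w => (vU2 w, vU3 w)),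
        R2 >= cmi p vU2 vX2 (fun w => (vU1 w, vU3 w)) &
        R3 >= cmi p vU3 vX3 (fun w => (vU1 w, vU2 w))] /\
    [/\ R2 + R3 >= cmi p (fun w => (vX2 w, vX3 w)) (fun w => (vU2 w, vU3 w)) vU1,
        R1 + R3 >= cmi p (fun w => (vX1 w, vX3 w)) (fun w => (vU1 w, vU3 w)) vU2,
        R1 + R2 >= cmi p (fun w => (vX1 w, vX2 w)) (fun w => (vU1 w, vU2 w)) vU3 &
        R1 + R2 + R3 >= mi p (fun w => (vX1 w, vX2 w, vX3 w))
                             (fun w => (vU1 w, vU2 w, vU3 w))].

Definition cond_ii (Delta Csum : R) : Prop :=
  Delta <= mi p vY (fun w => (vU1 w, vU2 w, vU3 w)) /\
  Csum >= mi p (fun w => (vX1 w, vX2 w, vX3 w)) (fun w => (vU1 w, vU2 w, vU3 w))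
          + cmi p (fun w => (vX2 w, vX3 w)) (fun w => (vU2 w, vU3 w)) vU1.

End Network.

Definition RI_sum (R : realType) (X1 X2 X3 Y : finType)
  (P : X1 * X2 * X3 * Y -> R) (DC : R * R) : Prop :=
  0 <= DC.1 /\ 0 <= DC.2 /\
  exists (U1 U2 U3 : finType) (W1 : X1 -> U1 -> R) (W2 : X2 -> U2 -> R)
         (W3 : X3 -> U3 -> R),
    [/\ is_kernel W1, is_kernel W2, is_kernel W3 &
        cond_i P W1 W2 W3 DC.1 DC.2].

Definition RII_sum (R : realType) (X1 X2 X3 Y : finType)
  (P : X1 * X2 * X3 * Y -> R) (DC : R * R) : Prop :=
  0 <= DC.1 /\ 0 <= DC.2 /\
  exists (U1 U2 U3 : finType) (W1 : X1 -> U1 -> R) (W2 : X2 -> U2 -> R)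
         (W3 : X3 -> U3 -> R),
    [/\ is_kernel W1, is_kernel W2, is_kernel W3 &
        cond_ii P W1 W2 W3 DC.1 DC.2].

From HB Require Import structures.
From mathcomp Require Import all_boot all_order all_algebra.
From mathcomp Require Import reals exp.
From mathcomp Require Import ring lra.
From Stdlib Require Import FunctionalExtensionality PropExtensionality.
Import Order.TTheory GRing.Theory Num.Theory.
Set Implicit Arguments. Unset Strict Implicit. Unset Printing Implicit Defensive.
Local Open Scope ring_scope.

(* Only (ii) => (i) needs an argument: (i) => (ii) follows by adding up the edge
   constraints. Since each U_i is produced from X_i alone, H(U_i, S) = H(S) + H(U_i|X_i)
   for every family S of variables containing X_i but not U_i, so every quantity in (i)
   is a linear combination of the joint entropies of the U_i and of the H(U_i|X_i).
   Take R1 = I(X1;U1), R2 = I(X2;U2|U1), R3 = I(X3;U3|U1,U2), C15 = R1, C24 = R2,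
   C34 = R3 and give the rest of the budget to C45: the constraints of (i) then reduce
   to the nonnegativity of I(U_i;X_i|U_j,U_k), I(U1;U2,U3), I(U2;U3|U1), I(U1;U2) and
   I(U1,U2;U3). *)

Lemma ln_le_subr1 (R : realType) (x : R) : 0 < x -> ln x <= x - 1.
Proof.
by move=> x0; have := @le_ln1Dx R (x - 1); rewrite (addrC 1) subrK; apply; rewrite ltrBrDr addNr.
Qed.

Section Entropy.
Variables (R : realType) (T : finType) (p : T -> R).

Lemma lawE (S : finType) (f : T -> S) t :
  law p f t = \sum_w p w * (f w == t)%:R.
Proof. by rewrite /law big_mkcond; apply: eq_bigr => w _; case: eqP; rewrite ?mulr1 ?mulr0. Qed.

Lemma sum_law (S : finType) (f : T -> S) (F : S -> R) :
  \sum_t law p f t * F t = \sum_w p w * F (f w).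
Proof.
under eq_bigr do rewrite lawE big_distrl /=.
rewrite exchange_big /=; apply: eq_bigr => w _.
rewrite (bigD1 (f w)) //= eqxx mulr1 big1 ?addr0 // => t /negbTE.
by rewrite eq_sym => ->; rewrite mulr0 mul0r.
Qed.

Lemma entropyE (S : finType) (f : T -> S) :
  entropy p f = - \sum_w p w * ln (law p f (f w)).
Proof. by rewrite /entropy sum_law. Qed.

Lemma entropy_relabel (S S' : finType) (f : T -> S) (g : T -> S') :
  (forall w w', (f w' == f w) = (g w' == g w)) -> entropy p f = entropy p g.
Proof.
move=> fg; rewrite !entropyE; congr (- _); apply: eq_bigr => w _.
by congr (_ * ln _); apply: eq_bigl => w'; rewrite fg.
Qed.

Hypothesis p_pmf : is_pmf p.

Lemma law_ge0 (S : finType) (f : T -> S) t : 0 <= law p f t.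
Proof. by apply: sumr_ge0 => w _; apply: p_pmf.1. Qed.

Lemma law_ge (S : finType) (f : T -> S) w : p w <= law p f (f w).
Proof. by rewrite /law (bigD1 w) //= lerDl; apply: sumr_ge0 => w' _; apply: p_pmf.1. Qed.

Lemma law_gt0 (S : finType) (f : T -> S) w : 0 < p w -> 0 < law p f (f w).
Proof. by move=> pw; apply: lt_le_trans pw (law_ge f w). Qed.

Lemma sum_law1 (S : finType) (f : T -> S) : \sum_t law p f t = 1.
Proof.
have := sum_law f (fun _ => 1); under eq_bigr do rewrite mulr1.
by under [in RHS]eq_bigr do rewrite mulr1; rewrite p_pmf.2.
Qed.

Lemma sum_law_pair_fst (A C : finType) (a : T -> A) (c : T -> C) z :
  \sum_x law p (fun w => (a w, c w)) (x, z) = law p c z.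
Proof.
under eq_bigr do rewrite lawE.
rewrite exchange_big lawE /=; apply: eq_bigr => w _.
rewrite -big_distrr /=; congr (_ * _).
rewrite (bigD1 (a w)) //= big1 ?addr0; first by rewrite xpair_eqE eqxx.
by move=> x /negbTE; rewrite xpair_eqE eq_sym => ->.
Qed.

Lemma entropy_const (S : finType) (s : S) : entropy p (fun _ => s) = 0.
Proof.
have law1 : law p (fun _ => s) s = 1 by rewrite /law; under eq_bigl do rewrite eqxx; exact: p_pmf.2.
by rewrite entropyE big1 ?oppr0 // => w _; rewrite law1 ln1 mulr0.
Qed.

Section CondMutualInformation.
Variables (A B C : finType) (a : T -> A) (b : T -> B) (c : T -> C).

Let Lac := law p (fun w => (a w, c w)).
Let Lbc := law p (fun w => (b w, c w)).
Let Labc := law p (fun w => (a w, b w, c w)).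
Let Lc := law p c.

Let ratio (t : A * B * C) := Lac (t.1.1, t.2) * Lbc (t.1.2, t.2) / (Labc t * Lc t.2).

Lemma cmi_log_ratio : cmi p a b c = - \sum_w p w * ln (ratio (a w, b w, c w)).
Proof.
rewrite /cmi !entropyE -!sumrN -!big_split /=; apply: eq_bigr => w _.
have [pw0|pw_neq0] := eqVneq (p w) 0; first by rewrite pw0; ring.
have pw : 0 < p w by rewrite lt_def pw_neq0 p_pmf.1.
rewrite /ratio /= ln_div ?posrE ?mulr_gt0 ?law_gt0 // !lnM ?posrE ?law_gt0 //.
ring.
Qed.

Lemma sum_law_ratio_le1 : \sum_t Labc t * ratio t <= 1.
Proof.
apply: (@le_trans _ _ (\sum_t Lac (t.1.1, t.2) * Lbc (t.1.2, t.2) / Lc t.2)).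
  apply: ler_sum => t _; rewrite /ratio.
  have [->|nz] := eqVneq (Labc t) 0; first by rewrite mul0r divr_ge0 ?mulr_ge0 ?law_ge0.
  by rewrite invfM mulrCA mulVKf.
rewrite -(pair_bigA _ (fun ab z => Lac (ab.1, z) * Lbc (ab.2, z) / Lc z)) /=.
rewrite -(pair_bigA _ (fun x y => \sum_z Lac (x, z) * Lbc (y, z) / Lc z)) /=.
under eq_bigr do rewrite exchange_big /=.
rewrite exchange_big /= -(sum_law1 c); apply: ler_sum => z _.
under eq_bigr => x _ do rewrite -big_distrl -big_distrr /= sum_law_pair_fst.
rewrite -!big_distrl /= sum_law_pair_fst -/(Lc z).
by have [->|nz] := eqVneq (Lc z) 0; rewrite ?mul0r ?mulfK.
Qed.

Lemma cmi_ge0 : 0 <= cmi p a b c.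
Proof.
rewrite cmi_log_ratio oppr_ge0.
apply: (@le_trans _ _ (\sum_w p w * (ratio (a w, b w, c w) - 1))).
  apply: ler_sum => w _.
  have [pw0|pw_neq0] := eqVneq (p w) 0; first by rewrite pw0 !mul0r.
  have pw : 0 < p w by rewrite lt_def pw_neq0 p_pmf.1.
  rewrite ler_pM2l // ln_le_subr1 // /ratio divr_gt0 ?mulr_gt0 ?law_gt0 //.
under eq_bigr do rewrite mulrBr mulr1.
rewrite sumrB p_pmf.2 -(sum_law (fun w => (a w, b w, c w)) ratio) subr_le0.
exact: sum_law_ratio_le1.
Qed.

End CondMutualInformation.
End Entropy.

(* When U is drawn from X through the kernel K, [- loglik p K x u] is H(U|X). *)
Definition loglik (R : realType) (T X U : finType) (p : T -> R) (K : X -> U -> R)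
    (x : T -> X) (u : T -> U) : R :=
  \sum_t p t * ln (K (x t) (u t)).

Section KernelOutput.
Variables (R : realType) (T Z V X : finType) (p : T -> R) (e : Z * V -> T).
Variables (q : Z -> R) (K : X -> V -> R) (x : T -> X) (u : T -> V).
Hypotheses (p_pmf : is_pmf p) (e_bij : bijective e) (K_kernel : is_kernel K).
Hypothesis p_e : forall z v, p (e (z, v)) = q z * K (x (e (z, v))) v.
Hypothesis u_e : forall z v, u (e (z, v)) = v.
Hypothesis x_e : forall z v v', x (e (z, v)) = x (e (z, v')).

Variables (S : finType) (f : T -> S).
Hypothesis f_e : forall z v v', f (e (z, v)) = f (e (z, v')).
Hypothesis f_x : forall t t', f t = f t' -> x t = x t'.

Lemma law_reindex (S' : finType) (g : T -> S') y :
  law p g y = \sum_z \sum_v p (e (z, v)) * (g (e (z, v)) == y)%:R.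
Proof.
rewrite lawE (reindex e) /=; last exact: onW_bij.
by rewrite pair_bigA; apply: eq_bigr => -[].
Qed.

Lemma law_kernel_output t :
  law p (fun t => (u t, f t)) (u t, f t) = K (x t) (u t) * law p f (f t).
Proof.
have [d _ ed] := e_bij; rewrite -[t]ed; case: (d t) => z0 v0 {t}.
set t := e (z0, v0).
rewrite !law_reindex big_distrr; apply: eq_bigr => z _ /=.
rewrite (bigD1 (u t)) //= big1 ?addr0; last first.
  by move=> v /negbTE ne; rewrite xpair_eqE u_e ne mulr0.
under [in RHS]eq_bigr => v _ do
  rewrite (f_e z v (u t)) p_e (x_e z v (u t)) -mulrA [K _ _ * _]mulrC mulrA.
rewrite -big_distrr /= (K_kernel _).2 mulr1 p_e xpair_eqE u_e eqxx /=.
by case: eqP => [/f_x ->|_]; rewrite ?mulr0 // !mulr1 mulrC.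
Qed.

Lemma entropy_kernel_output :
  entropy p (fun t => (u t, f t)) = entropy p f - loglik p K x u.
Proof.
rewrite /loglik !entropyE -opprD -big_split /=; congr (- _); apply: eq_bigr => t _.
rewrite law_kernel_output -mulrDr.
have [pt0|pt_neq0] := eqVneq (p t) 0; first by rewrite pt0 !mul0r.
have pt : 0 < p t by rewrite lt_def pt_neq0 p_pmf.1.
have Kt : 0 < K (x t) (u t).
  rewrite lt_def (K_kernel _).1 andbT; apply: contra pt_neq0 => /eqP K0.
  have [d _ ed] := e_bij; move: K0; rewrite -[t]ed; case: (d t) => z v.
  by rewrite p_e u_e => ->; rewrite mulr0.
by rewrite lnM ?posrE ?law_gt0 // addrC.
Qed.

End KernelOutput.

Lemma sum_kernel_output (R : realType) (Z V X : finType) (q : Z -> R) (K : X -> V -> R)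
    (x : Z -> X) (F : Z * V -> R) :
  is_kernel K -> (forall z v, F (z, v) = q z * K (x z) v) -> \sum_w F w = \sum_z q z.
Proof.
move=> K_kernel F_zv.
have -> : \sum_w F w = \sum_z \sum_v F (z, v) by rewrite pair_bigA; apply: eq_bigr => -[].
apply: eq_bigr => z _.
by under eq_bigr do rewrite F_zv; rewrite -big_distrr /= (K_kernel _).2 mulr1.
Qed.

Definition coords (X1 X2 X3 Y U1 U2 U3 : finType) (b1 b2 b3 b4 b5 b6 : bool)
    (w : Om X1 X2 X3 Y U1 U2 U3) :=
  (if b1 then Some (vX1 w) else None, if b2 then Some (vX2 w) else None,
   if b3 then Some (vX3 w) else None, if b4 then Some (vU1 w) else None,
   if b5 then Some (vU2 w) else None, if b6 then Some (vU3 w) else None).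

Ltac coords_relabel :=
  move=> w w'; rewrite /coords /= !xpair_eqE ?(inj_eq (@Some_inj _)) ?eqxx /= ?andbT ?andTb;
  try done; by do ![case: eqP].

Section Network.
Variables (R : realType) (X1 X2 X3 Y U1 U2 U3 : finType) (P : X1 * X2 * X3 * Y -> R)
  (W1 : X1 -> U1 -> R) (W2 : X2 -> U2 -> R) (W3 : X3 -> U3 -> R).
Hypotheses (P_pmf : is_pmf P) (W1_kernel : is_kernel W1) (W2_kernel : is_kernel W2)
  (W3_kernel : is_kernel W3).

Local Notation Om := (Om X1 X2 X3 Y U1 U2 U3).
Local Notation p := (jointLaw P W1 W2 W3).
Local Notation H b1 b2 b3 b4 b5 b6 := (entropy p (coords b1 b2 b3 b4 b5 b6)).
Local Notation vX1 := (@vX1 X1 X2 X3 Y U1 U2 U3).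
Local Notation vX2 := (@vX2 X1 X2 X3 Y U1 U2 U3).
Local Notation vX3 := (@vX3 X1 X2 X3 Y U1 U2 U3).
Local Notation vU1 := (@vU1 X1 X2 X3 Y U1 U2 U3).
Local Notation vU2 := (@vU2 X1 X2 X3 Y U1 U2 U3).
Local Notation vU3 := (@vU3 X1 X2 X3 Y U1 U2 U3).
Local Notation vY := (@vY X1 X2 X3 Y U1 U2 U3).
Local Notation HU b4 b5 b6 := (H false false false b4 b5 b6).
Local Notation L1 := (loglik p W1 vX1 vU1).
Local Notation L2 := (loglik p W2 vX2 vU2).
Local Notation L3 := (loglik p W3 vX3 vU3).

Lemma jointLaw_pmf : is_pmf p.
Proof.
split.
  case=> [[[[[[x1 x2] x3] y] u1] u2] u3].
  by rewrite !mulr_ge0 ?P_pmf.1 ?(W1_kernel _).1 ?(W2_kernel _).1 ?(W3_kernel _).1.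
rewrite (sum_kernel_output (K := W3) (x := fun z : X1 * X2 * X3 * Y * U1 * U2 => z.1.1.1.2)
  (q := fun z => P z.1.1 * W1 z.1.1.1.1.1 z.1.2 * W2 z.1.1.1.1.2 z.2)) //; last first.
  by move=> [[[[[x1 x2] x3] y] u1] u2] u3.
rewrite (sum_kernel_output (K := W2) (x := fun z : X1 * X2 * X3 * Y * U1 => z.1.1.1.2)
  (q := fun z => P z.1 * W1 z.1.1.1.1 z.2)) //.
by rewrite (sum_kernel_output (K := W1) (x := fun z : X1 * X2 * X3 * Y => z.1.1.1) (q := P))
  ?P_pmf.2.
Qed.

Let p_pmf : is_pmf p := jointLaw_pmf.

Definition move_U1 (w : X1 * X2 * X3 * Y * U2 * U3 * U1) : Om :=
  let: (x, u2, u3, u1) := w in (x, u1, u2, u3).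
Definition move_U2 (w : X1 * X2 * X3 * Y * U1 * U3 * U2) : Om :=
  let: (x, u1, u3, u2) := w in (x, u1, u2, u3).

Lemma move_U1_bij : bijective move_U1.
Proof. by exists (fun '(x, u1, u2, u3) => (x, u2, u3, u1)) => -[[[x ? ] ?] ?]. Qed.

Lemma move_U2_bij : bijective move_U2.
Proof. by exists (fun '(x, u1, u2, u3) => (x, u1, u3, u2)) => -[[[x ? ] ?] ?]. Qed.

Lemma entropy_coords_U1 b2 b3 b5 b6 :
  H true b2 b3 true b5 b6 = H true b2 b3 false b5 b6 - L1.
Proof.
rewrite -(entropy_kernel_output (e := move_U1)
  (q := fun '(x, u2, u3) => P x * W2 x.1.1.2 u2 * W3 x.1.2 u3)) //.
- by apply: entropy_relabel; case: b2; case: b3; case: b5; case: b6; coords_relabel.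
- exact: move_U1_bij.
- by move=> [[[[[x1 x2] x3] y] u2] u3] u1 /=; ring.
- by move=> [[x u2] u3] u1.
- by move=> [[x u2] u3] u1.
- by move=> [[x u2] u3] u1.
- by move=> w w' /(congr1 (fun s => s.1.1.1.1.1)) [].
Qed.

Lemma entropy_coords_U2 b1 b3 b4 b6 :
  H b1 true b3 b4 true b6 = H b1 true b3 b4 false b6 - L2.
Proof.
rewrite -(entropy_kernel_output (e := move_U2)
  (q := fun '(x, u1, u3) => P x * W1 x.1.1.1 u1 * W3 x.1.2 u3)) //.
- by apply: entropy_relabel; case: b1; case: b3; case: b4; case: b6; coords_relabel.
- exact: move_U2_bij.
- by move=> [[[[[x1 x2] x3] y] u1] u3] u2 /=; ring.
- by move=> [[x u1] u3] u2.
- by move=> [[x u1] u3] u2.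
- by move=> [[x u1] u3] u2.
- by move=> w w' /(congr1 (fun s => s.1.1.1.1.2)) [].
Qed.

Lemma entropy_coords_U3 b1 b2 b4 b5 :
  H b1 b2 true b4 b5 true = H b1 b2 true b4 b5 false - L3.
Proof.
rewrite -(entropy_kernel_output (e := id)
  (q := fun '(x, u1, u2) => P x * W1 x.1.1.1 u1 * W2 x.1.1.2 u2)) //.
- by apply: entropy_relabel; case: b1; case: b2; case: b4; case: b5; coords_relabel.
- by exists id.
- by move=> [[[[[x1 x2] x3] y] u1] u2] u3.
- by move=> w w' /(congr1 (fun s => s.1.1.1.2)) [].
Qed.

Lemma entropy_coords0 : H false false false false false false = 0.
Proof. exact: (entropy_const p_pmf (None, None, None, None, None, None)). Qed.

Ltac expand_cmi := rewrite /mi /cmi; congr (_ + _ - _ - _); apply: entropy_relabel; coords_relabel.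
(* The entropies are generalized first: [ring] would otherwise compare them by unfolding. *)
Ltac reduce_markov :=
  rewrite ?(entropy_coords_U1, entropy_coords_U2, entropy_coords_U3) ?entropy_coords0;
  repeat match goal with |- context [entropy ?q ?f] => move: (entropy q f) => ? end;
  repeat match goal with |- context [loglik ?q ?K ?x ?u] => move: (loglik q K x u) => ? end;
  ring.

Lemma mi_X_U : mi p (fun w => (vX1 w, vX2 w, vX3 w)) (fun w => (vU1 w, vU2 w, vU3 w))
  = HU true true true + L1 + L2 + L3.
Proof.
have -> : mi p (fun w => (vX1 w, vX2 w, vX3 w)) (fun w => (vU1 w, vU2 w, vU3 w)) =
  H true true true false false false + HU true true true - H true true true true true true
  - H false false false false false false by expand_cmi.
by reduce_markov.
Qed.

Lemma cmi_X23_U23_U1 :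
  cmi p (fun w => (vX2 w, vX3 w)) (fun w => (vU2 w, vU3 w)) vU1
  = HU true true true - HU true false false + L2 + L3.
Proof.
have -> : cmi p (fun w => (vX2 w, vX3 w)) (fun w => (vU2 w, vU3 w)) vU1 =
  H false true true true false false + H false false false true true true
    - H false true true true true true - H false false false true false false by expand_cmi.
by reduce_markov.
Qed.

Lemma cmi_U1_X1_U23 :
  cmi p vU1 vX1 (fun w => (vU2 w, vU3 w)) = HU true true true - HU false true true + L1.
Proof.
have -> : cmi p vU1 vX1 (fun w => (vU2 w, vU3 w)) =
  H false false false true true true + H true false false false true true
    - H true false false true true true - H false false false false true true by expand_cmi.
by reduce_markov.
Qed.

Lemma cmi_U2_X2_U13 :
  cmi p vU2 vX2 (fun w => (vU1 w, vU3 w)) = HU true true true - HU true false true + L2.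
Proof.
have -> : cmi p vU2 vX2 (fun w => (vU1 w, vU3 w)) =
  H false false false true true true + H false true false true false true
    - H false true false true true true - H false false false true false true by expand_cmi.
by reduce_markov.
Qed.

Lemma cmi_U3_X3_U12 :
  cmi p vU3 vX3 (fun w => (vU1 w, vU2 w)) = HU true true true - HU true true false + L3.
Proof.
have -> : cmi p vU3 vX3 (fun w => (vU1 w, vU2 w)) =
  H false false false true true true + H false false true true true false
    - H false false true true true true - H false false false true true false by expand_cmi.
by reduce_markov.
Qed.

Lemma cmi_X13_U13_U2 :
  cmi p (fun w => (vX1 w, vX3 w)) (fun w => (vU1 w, vU3 w)) vU2
  = HU true true true - HU false true false + L1 + L3.
Proof.
have -> : cmi p (fun w => (vX1 w, vX3 w)) (fun w => (vU1 w, vU3 w)) vU2 =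
  H true false true false true false + H false false false true true true
    - H true false true true true true - H false false false false true false by expand_cmi.
by reduce_markov.
Qed.

Lemma cmi_X12_U12_U3 :
  cmi p (fun w => (vX1 w, vX2 w)) (fun w => (vU1 w, vU2 w)) vU3
  = HU true true true - HU false false true + L1 + L2.
Proof.
have -> : cmi p (fun w => (vX1 w, vX2 w)) (fun w => (vU1 w, vU2 w)) vU3 =
  H true true false false false true + H false false false true true true
    - H true true false true true true - H false false false false false true by expand_cmi.
by reduce_markov.
Qed.

Lemma mi_U1_U23 :
  mi p vU1 (fun w => (vU2 w, vU3 w)) = HU true false false + HU false true true - HU true true true.
Proof.
have -> : mi p vU1 (fun w => (vU2 w, vU3 w)) =
  H false false false true false false + H false false false false true true
    - H false false false true true true - H false false false false false false by expand_cmi.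
by reduce_markov.
Qed.

Lemma cmi_U2_U3_U1 :
  cmi p vU2 vU3 vU1
  = HU true true false + HU true false true - HU true true true - HU true false false.
Proof.
have -> : cmi p vU2 vU3 vU1 =
  H false false false true true false + H false false false true false true
    - H false false false true true true - H false false false true false false by expand_cmi.
by reduce_markov.
Qed.

Lemma mi_U1_U2 :
  mi p vU1 vU2 = HU true false false + HU false true false - HU true true false.
Proof.
have -> : mi p vU1 vU2 =
  H false false false true false false + H false false false false true false
    - H false false false true true false - H false false false false false false by expand_cmi.
by reduce_markov.
Qed.

Lemma mi_U12_U3 :
  mi p (fun w => (vU1 w, vU2 w)) vU3
  = HU true true false + HU false false true - HU true true true.
Proof.
have -> : mi p (fun w => (vU1 w, vU2 w)) vU3 =
  H false false false true true false + H false false false false false true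
    - H false false false true true true - H false false false false false false by expand_cmi.
by reduce_markov.
Qed.

Lemma cond_i_iff_ii Delta Csum :
  cond_i P W1 W2 W3 Delta Csum <-> cond_ii P W1 W2 W3 Delta Csum.
Proof.
have A1 := cmi_ge0 p_pmf vU1 vX1 (fun w => (vU2 w, vU3 w)).
have A2 := cmi_ge0 p_pmf vU2 vX2 (fun w => (vU1 w, vU3 w)).
have A3 := cmi_ge0 p_pmf vU3 vX3 (fun w => (vU1 w, vU2 w)).
have S1 : 0 <= mi p vU1 (fun w => (vU2 w, vU3 w)) := cmi_ge0 p_pmf _ _ _.
have S2 := cmi_ge0 p_pmf vU2 vU3 vU1.
have S3 : 0 <= mi p vU1 vU2 := cmi_ge0 p_pmf _ _ _.
have S4 : 0 <= mi p (fun w => (vU1 w, vU2 w)) vU3 := cmi_ge0 p_pmf _ _ _.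
rewrite cmi_U1_X1_U23 in A1; rewrite cmi_U2_X2_U13 in A2; rewrite cmi_U3_X3_U12 in A3.
rewrite mi_U1_U23 in S1; rewrite cmi_U2_U3_U1 in S2.
rewrite mi_U1_U2 in S3; rewrite mi_U12_U3 in S4.
rewrite /cond_i /cond_ii mi_X_U cmi_X23_U23_U1 cmi_U1_X1_U23 cmi_U2_X2_U13 cmi_U3_X3_U12.
rewrite cmi_X13_U13_U2 cmi_X12_U12_U3.
move: A1 A2 A3 S1 S2 S3 S4.
move: (HU true true true) (HU true true false) (HU true false true) (HU false true true)
  (HU true false false) (HU false true false) (HU false false true) L1 L2 L3
  (mi p vY (fun w => (vU1 w, vU2 w, vU3 w))).
move=> G123 G12 G13 G23 G1 G2 G3 l1 l2 l3 IY A1 A2 A3 S1 S2 S3 S4.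
split=> -[hD h]; split=> //.
  case: h => C15 [C24 [C34 [C45 [R1 [R2 [R3
    [[_ _ _ _ <-] [_ [[c1 c2 c3 c4] [_ [b23 _ _ bT]]]]]]]]]]].
  lra.
exists (G1 + l1), (G12 - G1 + l2), (G123 - G12 + l3), (Csum - (G123 + l1 + l2 + l3)).
exists (G1 + l1), (G12 - G1 + l2), (G123 - G12 + l3).
by do !split; lra.
Qed.
End Network.

Theorem mainTheorem2 :
  (forall (R : realType) (X1 X2 X3 Y U1 U2 U3 : finType)
     (P : X1 * X2 * X3 * Y -> R)
     (W1 : X1 -> U1 -> R) (W2 : X2 -> U2 -> R) (W3 : X3 -> U3 -> R)
     (Delta Csum : R),
     is_pmf P -> is_kernel W1 -> is_kernel W2 -> is_kernel W3 ->
     0 <= Delta -> 0 <= Csum ->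
     (cond_i P W1 W2 W3 Delta Csum <-> cond_ii P W1 W2 W3 Delta Csum)) /\
  (forall (R : realType) (X1 X2 X3 Y : finType) (P : X1 * X2 * X3 * Y -> R),
     is_pmf P -> RI_sum P = RII_sum P).
Proof.
split=> [R X1 X2 X3 Y U1 U2 U3 P W1 W2 W3 Delta Csum P_pmf W1_k W2_k W3_k _ _|R X1 X2 X3 Y P P_pmf].
  exact: cond_i_iff_ii.
apply: functional_extensionality => DC; apply: propositional_extensionality.
split=> -[DC1 [DC2 [U1 [U2 [U3 [W1 [W2 [W3 [W1_k W2_k W3_k c]]]]]]]]];
  do 2 split=> //; exists U1, U2, U3, W1, W2, W3; split=> //; exact/(cond_i_iff_ii P_pmf).
Qed.
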